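(* Let $\mathbb F=\mathbb R$ or $\mathbb C$, let $U_1,V_1,U_1',V_1'$ be finite-dimensional normed vector spaces over $\mathbb F$, let $\mathcal A_1,\mathcal B_1:U_1\to V_1$ and $\mathcal A_1',\mathcal B_1':U_1'\to V_1'$ be surjective linear maps, and let $\varphi_1:U_1\to U_1'$, $\psi_1:V_1\to V_1'$ be homeomorphisms with $\psi_1\mathcal A_1=\mathcal A_1'\varphi_1$ and $\psi_1\mathcal B_1=\mathcal B_1'\varphi_1$. Then for every $u\in U_1$ and $v\in V_1$, \[\varphi_1(u+\operatorname{Ker}\mathcal B_1)=\varphi_1(u)+\operatorname{Ker}\mathcal B_1',\qquad \psi_1\bigl(v+\mathcal A_1(\operatorname{Ker}\mathcal B_1)\bigr)=\psi_1(v)+\mathcal A_1'(\operatorname{Ker}\mathcal B_1').\] Consequently $\varphi_1$ and $\psi_1$ induce well-defined bijections $\varphi_2:U_1/\operatorname{Ker}\mathcal B_1\to U_1'/\operatorname{Ker}\mathcal B_1'$ and $\psi_2:V_1/\mathcal A_1(\operatorname{Ker}\mathcal B_1)\to V_1'/\mathcal A_1'(\operatorname{Ker}\mathcal B_1')$, which are homeomorphisms (for the quotient topologies) satisfying $\psi_2\mathcal A_2=\mathcal A_2'\varphi_2$ and $\psi_2\mathcal B_2=\mathcal B_2'\varphi_2$, where $\mathcal A_2,\mathcal B_2$ and $\mathcal A_2',\mathcal B_2'$ are the linear maps induced by $\mathcal A_1,\mathcal B_1$ and $\mathcal A_1',\mathcal B_1'$ on these quotient spaces.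
   Context: Homeomorphisms are with respect to the norm topologies; $\varphi_1,\psi_1$ need not be linear. The induced map $\mathcal A_2:U_1/\operatorname{Ker}\mathcal B_1\to V_1/\mathcal A_1(\operatorname{Ker}\mathcal B_1)$ sends $u+\operatorname{Ker}\mathcal B_1$ to $\mathcal A_1(u)+\mathcal A_1(\operatorname{Ker}\mathcal B_1)$, and $\mathcal B_2$ sends $u+\operatorname{Ker}\mathcal B_1$ to $\mathcal B_1(u)+\mathcal A_1(\operatorname{Ker}\mathcal B_1)$; similarly for the primed maps. *)

From Stdlib Require Import Reals.
From Stdlib Require Vectors.Fin.
Open Scope R_scope.

Record Cpx := mkC { re : R ; im : R }.
Definition Cadd (a b : Cpx) : Cpx := mkC (re a + re b) (im a + im b).
Definition Copp (a : Cpx) : Cpx := mkC (- re a) (- im a).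
Definition Cmul (a b : Cpx) : Cpx :=
  mkC (re a * re b - im a * im b) (re a * im b + im a * re b).
Definition C0 : Cpx := mkC 0 0.
Definition Cabs (a : Cpx) : R := sqrt (re a * re a + im a * im a).

Inductive scalar_field := FR | FC.

Definition scal (F : scalar_field) : Type :=
  match F with FR => R | FC => Cpx end.
Definition sadd (F : scalar_field) : scal F -> scal F -> scal F :=
  match F return scal F -> scal F -> scal F with FR => Rplus | FC => Cadd end.
Definition sopp (F : scalar_field) : scal F -> scal F :=
  match F return scal F -> scal F with FR => Ropp | FC => Copp end.
Definition smul (F : scalar_field) : scal F -> scal F -> scal F :=
  match F return scal F -> scal F -> scal F with FR => Rmult | FC => Cmul end.
Definition szero (F : scalar_field) : scal F :=
  match F return scal F with FR => 0 | FC => C0 end.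
Definition sabs (F : scalar_field) : scal F -> R :=
  match F return scal F -> R with FR => Rabs | FC => Cabs end.

Definition Vec (F : scalar_field) (n : nat) : Type := Fin.t n -> scal F.
Definition vadd {F n} (x y : Vec F n) : Vec F n := fun i => sadd F (x i) (y i).
Definition vopp {F n} (x : Vec F n) : Vec F n := fun i => sopp F (x i).
Definition vsub {F n} (x y : Vec F n) : Vec F n := vadd x (vopp y).
Definition vzero {F n} : Vec F n := fun _ => szero F.
Definition vscale {F n} (c : scal F) (x : Vec F n) : Vec F n := fun i => smul F c (x i).

Definition is_linear {F n m} (f : Vec F n -> Vec F m) : Prop :=
  (forall x y, f (vadd x y) = vadd (f x) (f y)) /\
  (forall c x, f (vscale c x) = vscale c (f x)).

Definition surjective {A B : Type} (f : A -> B) : Prop := forall b, exists a, f a = b.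
Definition bijective {A B : Type} (f : A -> B) : Prop :=
  exists g : B -> A, (forall a, g (f a) = a) /\ (forall b, f (g b) = b).

Definition is_norm {F n} (N : Vec F n -> R) : Prop :=
  (forall x, 0 <= N x) /\
  (forall x, N x = 0 -> x = vzero) /\
  (forall c x, N (vscale c x) = sabs F c * N x) /\
  (forall x y, N (vadd x y) <= N x + N y).

Definition topology (X : Type) := (X -> Prop) -> Prop.

Definition norm_open {F n} (N : Vec F n -> R) : topology (Vec F n) :=
  fun S => forall x, S x -> exists eps, 0 < eps /\ forall y, N (vsub y x) < eps -> S y.

Definition continuous {X Y} (TX : topology X) (TY : topology Y) (f : X -> Y) : Prop :=
  forall S, TY S -> TX (fun x => S (f x)).

Definition homeomorphism {X Y} (TX : topology X) (TY : topology Y) (f : X -> Y) : Prop :=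
  exists g : Y -> X, (forall x, g (f x) = x) /\ (forall y, f (g y) = y) /\
    continuous TX TY f /\ continuous TY TX g.

Definition set_eq {X} (S T : X -> Prop) : Prop := forall x, S x <-> T x.
Definition fimage {X Y} (f : X -> Y) (S : X -> Prop) : Y -> Prop :=
  fun y => exists x, S x /\ f x = y.
Definition ker {F n m} (f : Vec F n -> Vec F m) : Vec F n -> Prop :=
  fun x => f x = vzero.
Definition vcoset {F n} (u : Vec F n) (W : Vec F n -> Prop) : Vec F n -> Prop :=
  fun x => W (vsub x u).

Definition quot {F n} (W : Vec F n -> Prop) : Type :=
  { C : Vec F n -> Prop | exists u, C = vcoset u W }.
Definition qproj {F n} (W : Vec F n -> Prop) (u : Vec F n) : quot W :=
  exist _ (vcoset u W) (ex_intro _ u eq_refl).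
Definition quot_topology {F n} (T : topology (Vec F n)) (W : Vec F n -> Prop)
  : topology (quot W) :=
  fun S => T (fun x => S (qproj W x)).

(* The relations psi1 B1 = B1' phi1 with psi1 injective and phi1 surjective make phi1 carry
   each fibre u + Ker B1 of B1 onto the fibre of B1' through phi1 u; applying A1 and A1' and
   using psi1 A1 = A1' phi1 transports this to the cosets of A1(Ker B1).  Only additivity of
   the maps is involved.  A homeomorphism sending cosets onto cosets descends to the quotients,
   its inverse descending to the inverse, and continuity descends because quotient-open sets
   are defined through preimages under the projections; the relations among the induced maps
   hold on representatives, hence everywhere. *)

From Stdlib Require Import Reals.
From Stdlib Require Import FunctionalExtensionality ProofIrrelevance ClassicalEpsilon PropExtensionality.
Open Scope R_scope.

Lemma Cpx_ring_theory :
  ring_theory C0 (mkC 1 0) Cadd Cmul (fun a b => Cadd a (Copp b)) Copp (@eq Cpx).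
Proof.
  split; intros; repeat match goal with c : Cpx |- _ => destruct c end;
    unfold Cadd, Copp, Cmul, C0; simpl; f_equal; ring.
Qed.

Add Ring Cpx_ring : Cpx_ring_theory.

Section VectorGroup.
Context {F : scalar_field} {n : nat}.
Implicit Types x y z : Vec F n.

Ltac vec_ring := extensionality i; unfold vsub, vadd, vopp, vzero; destruct F; simpl; ring.

Lemma vsubv x : vsub x x = vzero.
Proof. vec_ring. Qed.
Lemma vadd0 x : vadd vzero x = x.
Proof. vec_ring. Qed.
Lemma vaddK x y : vsub (vadd x y) y = x.
Proof. vec_ring. Qed.
Lemma vaddKl x y : vsub (vadd x y) x = y.
Proof. vec_ring. Qed.
Lemma vsubK x y : vadd (vsub x y) y = x.
Proof. vec_ring. Qed.
Lemma vaddBK x y : vadd x (vsub y x) = y.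
Proof. vec_ring. Qed.
Lemma vsub_split x y z : vsub x z = vadd (vsub x y) (vsub y z).
Proof. vec_ring. Qed.
Lemma vsub_splitl x y z : vsub x y = vsub (vsub x z) (vsub y z).
Proof. vec_ring. Qed.

Lemma vsub_eq0 x y : vsub x y = vzero -> x = y.
Proof. intro H. rewrite <- (vsubK x y), H. apply vadd0. Qed.

End VectorGroup.

Definition is_additive {F n m} (f : Vec F n -> Vec F m) : Prop :=
  forall x y, f (vadd x y) = vadd (f x) (f y).

Lemma linear_additive {F n m} (f : Vec F n -> Vec F m) : is_linear f -> is_additive f.
Proof. now intros []. Qed.

Definition is_subgroup {F n} (W : Vec F n -> Prop) : Prop :=
  W vzero /\ (forall x y, W x -> W y -> W (vadd x y)) /\
  (forall x y, W x -> W y -> W (vsub x y)).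

Section Additive.
Context {F : scalar_field} {n m : nat} (f : Vec F n -> Vec F m).
Hypothesis f_add : is_additive f.

Lemma additive0 : f vzero = vzero.
Proof.
  assert (Hdouble : vadd (f vzero) (f vzero) = f vzero) by now rewrite <- f_add, vadd0.
  rewrite <- (vaddK (f vzero) (f vzero)), Hdouble. apply vsubv.
Qed.

Lemma additiveB x y : f (vsub x y) = vsub (f x) (f y).
Proof. rewrite <- (vsubK x y) at 2. rewrite f_add. symmetry. apply vaddK. Qed.

Lemma ker_coset u x : vcoset u (ker f) x <-> f x = f u.
Proof.
  unfold vcoset, ker. rewrite additiveB. split.
  - apply vsub_eq0.
  - intros ->. apply vsubv.
Qed.

Lemma ker_subgroup : is_subgroup (ker f).
Proof.
  unfold ker. split; [|split].
  - apply additive0.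
  - intros x y Hx Hy. rewrite f_add, Hx, Hy. apply vadd0.
  - intros x y Hx Hy. rewrite additiveB, Hx, Hy. apply vsubv.
Qed.

Lemma image_subgroup W : is_subgroup W -> is_subgroup (fimage f W).
Proof.
  intros (W0 & Wadd & Wsub). split; [|split].
  - exists vzero. split; [exact W0 | apply additive0].
  - intros _ _ [a [Ha <-]] [b [Hb <-]]. exists (vadd a b). auto.
  - intros _ _ [a [Ha <-]] [b [Hb <-]]. exists (vsub a b). split; auto. apply additiveB.
Qed.

Lemma coset_image u W :
  set_eq (vcoset (f u) (fimage f W)) (fimage f (vcoset u W)).
Proof.
  intro w. unfold vcoset. split.
  - intros [k [Hk Ek]]. exists (vadd u k). rewrite vaddKl, f_add, Ek.
    split; [exact Hk | apply vaddBK].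
  - intros [x [Hx <-]]. exists (vsub x u). split; [exact Hx | apply additiveB].
Qed.

End Additive.

Section Transport.
Context {F : scalar_field} {p q p' q' : nat}.
Variables (phi : Vec F p -> Vec F p') (psi : Vec F q -> Vec F q').

Lemma transport_ker_coset (B : Vec F p -> Vec F q) (B' : Vec F p' -> Vec F q') :
  is_additive B -> is_additive B' ->
  surjective phi -> (forall y y', psi y = psi y' -> y = y') ->
  (forall u, psi (B u) = B' (phi u)) ->
  forall u, set_eq (fimage phi (vcoset u (ker B))) (vcoset (phi u) (ker B')).
Proof.
  intros HB HB' phi_surj psi_inj Hcomm u y. rewrite ker_coset by exact HB'. split.
  - intros [x [Hx <-]]. apply ker_coset in Hx; [|exact HB].
    now rewrite <- !Hcomm, Hx.
  - intro Hy. destruct (phi_surj y) as [x <-]. exists x. split; [|reflexivity].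
    apply ker_coset; [exact HB|]. apply psi_inj. now rewrite !Hcomm.
Qed.

Lemma transport_image_coset (A : Vec F p -> Vec F q) (A' : Vec F p' -> Vec F q')
    (W : Vec F p -> Prop) (W' : Vec F p' -> Prop) :
  is_additive A -> is_additive A' ->
  (forall u, psi (A u) = A' (phi u)) ->
  (forall u, set_eq (fimage phi (vcoset u W)) (vcoset (phi u) W')) ->
  forall u, set_eq (fimage psi (vcoset (A u) (fimage A W)))
                   (vcoset (psi (A u)) (fimage A' W')).
Proof.
  intros HA HA' Hcomm Hphi u y. rewrite Hcomm. split.
  - intros [w [Hw <-]]. apply (coset_image A HA) in Hw. destruct Hw as [x [Hx <-]].
    apply (coset_image A' HA').
    exists (phi x). split; [apply Hphi; now exists x | symmetry; apply Hcomm].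
  - intro Hy. apply (coset_image A' HA') in Hy. destruct Hy as [x' [Hx' <-]].
    apply Hphi in Hx'. destruct Hx' as [x [Hx <-]].
    exists (A x). split; [apply (coset_image A HA); now exists x | apply Hcomm].
Qed.

End Transport.

Section Quotient.
Context {F : scalar_field}.

Lemma qproj_eq {n} (W : Vec F n -> Prop) a b :
  is_subgroup W -> W (vsub a b) -> qproj W a = qproj W b.
Proof.
  intros (_ & Wadd & Wsub) Hab. unfold qproj. apply eq_exist_uncurried.
  assert (E : vcoset a W = vcoset b W).
  { extensionality x. apply propositional_extensionality. unfold vcoset. split; intro Hx.
    - rewrite (vsub_split x a b). auto.
    - rewrite (vsub_splitl x a b). auto. }
  exists E. apply proof_irrelevance.
Qed.

Lemma quot_ind {n} (W : Vec F n -> Prop) (P : quot W -> Prop) :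
  (forall u, P (qproj W u)) -> forall x, P x.
Proof.
  intros HP [C [u e]]. subst C. exact (HP u).
Qed.

Definition maps_cosets {n m} (W : Vec F n -> Prop) (W' : Vec F m -> Prop)
    (f : Vec F n -> Vec F m) : Prop :=
  forall u x, vcoset u W x -> vcoset (f u) W' (f x).

Lemma image_coset_maps_cosets {n m} (W : Vec F n -> Prop) (W' : Vec F m -> Prop) f :
  (forall u, set_eq (fimage f (vcoset u W)) (vcoset (f u) W')) -> maps_cosets W W' f.
Proof. intros Hcos u x Hx. apply Hcos. now exists x. Qed.

Definition quot_map {n m} (W : Vec F n -> Prop) (W' : Vec F m -> Prop)
    (f : Vec F n -> Vec F m) (x : quot W) : quot W' :=
  qproj W' (f (proj1_sig (constructive_indefinite_description _ (proj2_sig x)))).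

Lemma quot_map_qproj {n m} (W : Vec F n -> Prop) (W' : Vec F m -> Prop) f :
  is_subgroup W -> is_subgroup W' -> maps_cosets W W' f ->
  forall u, quot_map W W' f (qproj W u) = qproj W' (f u).
Proof.
  intros HW HW' Hf u. unfold quot_map.
  destruct (constructive_indefinite_description _ _) as [u' e]. simpl in *.
  symmetry. apply qproj_eq; [exact HW'|]. apply Hf.
  assert (Hu : vcoset u W u) by (unfold vcoset; rewrite vsubv; apply HW).
  now rewrite e in Hu.
Qed.

Lemma quot_map_continuous {n m} (T : topology (Vec F n)) (T' : topology (Vec F m))
    (W : Vec F n -> Prop) (W' : Vec F m -> Prop) f :
  is_subgroup W -> is_subgroup W' -> maps_cosets W W' f -> continuous T T' f ->
  continuous (quot_topology T W) (quot_topology T' W') (quot_map W W' f).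
Proof.
  intros HW HW' Hf Cf S HS. unfold quot_topology in *.
  replace (fun x => S (quot_map W W' f (qproj W x))) with (fun x => S (qproj W' (f x))).
  - exact (Cf _ HS).
  - extensionality x. now rewrite quot_map_qproj.
Qed.

Lemma quot_homeomorphism {n m} (T : topology (Vec F n)) (T' : topology (Vec F m))
    (W : Vec F n -> Prop) (W' : Vec F m -> Prop) f :
  is_subgroup W -> is_subgroup W' -> homeomorphism T T' f ->
  (forall u, set_eq (fimage f (vcoset u W)) (vcoset (f u) W')) ->
  homeomorphism (quot_topology T W) (quot_topology T' W') (quot_map W W' f).
Proof.
  intros HW HW' [g (Hgf & Hfg & Cf & Cg)] Hcos.
  pose proof (image_coset_maps_cosets _ _ _ Hcos) as Mf.
  assert (Mg : maps_cosets W' W g).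
  { intros u x Hx. rewrite <- (Hfg u) in Hx. apply Hcos in Hx.
    destruct Hx as [z [Hz <-]]. now rewrite Hgf. }
  exists (quot_map W' W g). repeat split.
  - apply quot_ind. intro u. now rewrite !quot_map_qproj, Hgf.
  - apply quot_ind. intro u. now rewrite !quot_map_qproj, Hfg.
  - now apply quot_map_continuous.
  - now apply quot_map_continuous.
Qed.

End Quotient.

Lemma homeomorphism_bijective {X Y} (TX : topology X) (TY : topology Y) (f : X -> Y) :
  homeomorphism TX TY f -> bijective f.
Proof. intros [g (Hgf & Hfg & _)]. now exists g. Qed.

Lemma bijective_surjective {X Y} (f : X -> Y) : bijective f -> surjective f.
Proof. intros [g [_ Hfg]] y. now exists (g y). Qed.

Lemma bijective_injective {X Y} (f : X -> Y) : bijective f -> forall x x', f x = f x' -> x = x'.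
Proof. intros [g [Hgf _]] x x' E. now rewrite <- (Hgf x), E. Qed.

Theorem lemma5 (F : scalar_field) (p q p' q' : nat)
  (NU : Vec F p -> R) (NV : Vec F q -> R) (NU' : Vec F p' -> R) (NV' : Vec F q' -> R)
  (HNU : is_norm NU) (HNV : is_norm NV) (HNU' : is_norm NU') (HNV' : is_norm NV')
  (A1 B1 : Vec F p -> Vec F q) (A1' B1' : Vec F p' -> Vec F q')
  (HA1l : is_linear A1) (HB1l : is_linear B1) (HA1'l : is_linear A1') (HB1'l : is_linear B1')
  (HA1s : surjective A1) (HB1s : surjective B1) (HA1's : surjective A1') (HB1's : surjective B1')
  (phi1 : Vec F p -> Vec F p') (psi1 : Vec F q -> Vec F q')
  (Hphi1 : homeomorphism (norm_open NU) (norm_open NU') phi1)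
  (Hpsi1 : homeomorphism (norm_open NV) (norm_open NV') psi1)
  (HA : forall u, psi1 (A1 u) = A1' (phi1 u))
  (HB : forall u, psi1 (B1 u) = B1' (phi1 u)) :
  (forall u : Vec F p,
     set_eq (fimage phi1 (vcoset u (ker B1))) (vcoset (phi1 u) (ker B1'))) /\
  (forall v : Vec F q,
     set_eq (fimage psi1 (vcoset v (fimage A1 (ker B1))))
            (vcoset (psi1 v) (fimage A1' (ker B1')))) /\
  exists (phi2 : quot (ker B1) -> quot (ker B1'))
         (psi2 : quot (fimage A1 (ker B1)) -> quot (fimage A1' (ker B1'))),
    (forall u, phi2 (qproj (ker B1) u) = qproj (ker B1') (phi1 u)) /\
    (forall v, psi2 (qproj (fimage A1 (ker B1)) v)
               = qproj (fimage A1' (ker B1')) (psi1 v)) /\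
    bijective phi2 /\ bijective psi2 /\
    homeomorphism (quot_topology (norm_open NU) (ker B1))
                  (quot_topology (norm_open NU') (ker B1')) phi2 /\
    homeomorphism (quot_topology (norm_open NV) (fimage A1 (ker B1)))
                  (quot_topology (norm_open NV') (fimage A1' (ker B1'))) psi2 /\
    forall (A2 B2 : quot (ker B1) -> quot (fimage A1 (ker B1)))
           (A2' B2' : quot (ker B1') -> quot (fimage A1' (ker B1'))),
      (forall u, A2 (qproj (ker B1) u) = qproj (fimage A1 (ker B1)) (A1 u)) ->
      (forall u, B2 (qproj (ker B1) u) = qproj (fimage A1 (ker B1)) (B1 u)) ->
      (forall u, A2' (qproj (ker B1') u) = qproj (fimage A1' (ker B1')) (A1' u)) ->
      (forall u, B2' (qproj (ker B1') u) = qproj (fimage A1' (ker B1')) (B1' u)) ->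
      (forall x, psi2 (A2 x) = A2' (phi2 x)) /\
      (forall x, psi2 (B2 x) = B2' (phi2 x)).
Proof.
  apply linear_additive in HA1l, HB1l, HA1'l, HB1'l.
  pose proof (homeomorphism_bijective _ _ _ Hphi1) as phi1_bij.
  pose proof (homeomorphism_bijective _ _ _ Hpsi1) as psi1_bij.
  assert (Hphi_cos := transport_ker_coset phi1 psi1 B1 B1' HB1l HB1'l
    (bijective_surjective _ phi1_bij) (bijective_injective _ psi1_bij) HB).
  assert (Hpsi_cos : forall v, set_eq (fimage psi1 (vcoset v (fimage A1 (ker B1))))
                                     (vcoset (psi1 v) (fimage A1' (ker B1')))).
  { intro v. destruct (HA1s v) as [u <-].
    exact (transport_image_coset phi1 psi1 A1 A1' _ _ HA1l HA1'l HA Hphi_cos u). }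
  pose proof (ker_subgroup B1 HB1l) as Hker.
  pose proof (ker_subgroup B1' HB1'l) as Hker'.
  pose proof (image_subgroup A1 HA1l _ Hker) as Himg.
  pose proof (image_subgroup A1' HA1'l _ Hker') as Himg'.
  pose proof (quot_homeomorphism _ _ _ _ phi1 Hker Hker' Hphi1 Hphi_cos) as Hphi2.
  pose proof (quot_homeomorphism _ _ _ _ psi1 Himg Himg' Hpsi1 Hpsi_cos) as Hpsi2.
  pose proof (quot_map_qproj _ _ phi1 Hker Hker' (image_coset_maps_cosets _ _ _ Hphi_cos))
    as Ephi2.
  pose proof (quot_map_qproj _ _ psi1 Himg Himg' (image_coset_maps_cosets _ _ _ Hpsi_cos))
    as Epsi2.
  split; [exact Hphi_cos|]. split; [exact Hpsi_cos|].
  exists (quot_map _ _ phi1), (quot_map _ _ psi1).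
  refine (conj Ephi2 (conj Epsi2 (conj (homeomorphism_bijective _ _ _ Hphi2)
    (conj (homeomorphism_bijective _ _ _ Hpsi2) (conj Hphi2 (conj Hpsi2 _)))))).
  intros A2 B2 A2' B2' EA2 EB2 EA2' EB2'.
  split; apply quot_ind; intro u; congruence.
Qed.
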